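(* Let $n\ge 3$ and let $P(G(n))$ be the power graph of the gyrogroup $G(n)$ (defined in the context), with identity $e=0$. Then: (1) the detour eccentricity satisfies $ec_D(u)=2^{n-1}$ if $u\in P(n)\setminus\{e\}$, $ec_D(e)=2^{n-1}-1$, and $ec_D(u)=2^{n-1}$ if $u\in H(n)$; (2) $rad_D(P(G(n)))=2^{n-1}-1$; (3) $dia_D(P(G(n)))=2^{n-1}$.
   Context: Let $n\ge 3$ be an integer and $m=2^{n-1}$. Let $P(n)=\{0,1,\dots,m-1\}$, $H(n)=\{m,m+1,\dots,2^n-1\}$ and $G(n)=P(n)\cup H(n)$. For $i,j\in G(n)$ let $t,s,k\in P(n)$ be the residues modulo $m$ (taken in $\{0,\dots,m-1\}$) of $i+j$, $i+(\frac m2-1)j$ and $(\frac m2+1)i+(\frac m2-1)j$, respectively, and define $i\oplus j=t$ if $i,j\in P(n)$; $i\oplus j=t+m$ if $i\in P(n),j\in H(n)$; $i\oplus j=s+m$ if $i\in H(n),j\in P(n)$; $i\oplus j=k$ if $i,j\in H(n)$. Then $(G(n),\oplus)$ is a gyrogroup with identity $e=0$. Powers are defined by $a^1=a$, $a^{k+1}=a^k\oplus a$. The power graph $P(G(n))$ is the simple undirected graph with vertex set $G(n)$ in which distinct vertices $u,v$ are adjacent if and only if $u^k=v$ or $v^k=u$ for some positive integer $k$. In a connected graph, the detour distance $d_D(u,v)$ is the length of a longest $u$–$v$ path; the detour eccentricity $ec_D(u)$ is $\max_v d_D(u,v)$; the detour radius $rad_D$ and detour diameter $dia_D$ are the minimum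 and maximum detour eccentricities over all vertices. *)

From mathcomp Require Import all_boot.
From mathcomp Require Import boolp.
Set Implicit Arguments. Unset Strict Implicit. Unset Printing Implicit Defensive.

Definition gm (n : nat) : nat := 2 ^ (n - 1).

Definition gop (n i j : nat) : nat :=
  let m := gm n in
  if i < m then
    (if j < m then (i + j) %% m else (i + j) %% m + m)
  else
    (if j < m then (i + (m %/ 2 - 1) * j) %% m + m
     else ((m %/ 2 + 1) * i + (m %/ 2 - 1) * j) %% m).

(* a^k with a^1 = a, a^(k+1) = a^k (+) a  (meaningful for k >= 1). *)
Definition gpow (n a k : nat) : nat := iter k.-1 (fun x => gop n x a) a.

Notation V n := 'I_(2 ^ n).

Definition padj (n : nat) (u v : V n) : bool :=
  (u != v) &&
  `[< exists k : nat, 0 < k /\ (gpow n u k = v \/ gpow n v k = u) >].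

(* there is a u--v path of length k (k edges, k+1 distinct vertices) *)
Definition has_path (n : nat) (u v : V n) (k : nat) : bool :=
  [exists t : k.-tuple (V n),
     [&& uniq (u :: val t), path (@padj n) u (val t) & last u (val t) == v]].

(* detour distance: length of a longest u--v path (a path has < 2^n edges) *)
Definition detour_dist (n : nat) (u v : V n) : nat :=
  \max_(k < 2 ^ n | has_path u v k) k.

Definition detour_ecc (n : nat) (u : V n) : nat :=
  \max_(v : V n) detour_dist u v.

Definition detour_rad (n : nat) : nat :=
  \big[minn/2 ^ n]_(u : V n) detour_ecc u.

Definition detour_diam (n : nat) : nat :=
  \max_(u : V n) detour_ecc u.

From HB Require Import structures.
From mathcomp Require Import all_boot boolp zify.
Set Implicit Arguments. Unset Strict Implicit. Unset Printing Implicit Defensive.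

(* On P(n) the operation is addition modulo m = 2^(n-1), so P(n) is a cyclic
   2-group; its subgroups form a chain, hence of any two elements of P(n) one is
   a power of the other and P(n) is a clique of the power graph.  Every h in
   H(n) has powers h, e, h, e, ..., so h is a pendant vertex attached to e.
   A simple path can therefore pass through H(n) only at its ends, which
   bounds its length by m, and by m - 1 when it starts at e.  Hamiltonian paths
   of the clique, prolonged through e to a vertex of H(n) where possible,
   attain these bounds. *)

Lemma mul_mod_solvable M a b : 0 < M -> gcdn a M %| b ->
  exists2 k, 0 < k & (k * a) %% M = b %% M.
Proof.
move=> M_gt0 dvd_b; have [a0|a_gt0] := posnP a.
  by exists 1; rewrite // a0 mod0n; move: dvd_b; rewrite a0 gcd0n /dvdn => /eqP.
case: (egcdnP M a_gt0) => km kn def_g _.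
(* Bezout gives km * a = gcd a M (mod M); adding M to the multiplier keeps it positive. *)
exists (km * (b %/ gcdn a M) + M); first by rewrite addn_gt0 M_gt0 orbT.
have -> : (km * (b %/ gcdn a M) + M) * a = (kn * (b %/ gcdn a M) + a) * M + b.
  by rewrite -{3}(divnK dvd_b) mulnDl mulnAC def_g; nia.
by rewrite modnMDl.
Qed.

Lemma dvdn_pexp_total p e d1 d2 : prime p ->
  d1 %| p ^ e -> d2 %| p ^ e -> (d1 %| d2) || (d2 %| d1).
Proof.
move=> p_pr /(dvdn_pfactor _ _ p_pr)[i _ ->] /(dvdn_pfactor _ _ p_pr)[j _ ->].
by rewrite !dvdn_Pexp2l ?prime_gt1 // leq_total.
Qed.

Lemma mul_mod_pexp_total p e a b : prime p ->
  exists2 k, 0 < k & (k * a) %% p ^ e = b %% p ^ e \/ (k * b) %% p ^ e = a %% p ^ e.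
Proof.
move=> p_pr; have pe_gt0 : 0 < p ^ e by rewrite expn_gt0 prime_gt0.
have [ab|ba] := orP (dvdn_pexp_total p_pr (dvdn_gcdr a (p ^ e)) (dvdn_gcdr b (p ^ e))).
- have [k k_gt0 akb] := mul_mod_solvable pe_gt0 (dvdn_trans ab (dvdn_gcdl b _)).
  by exists k; [|left].
- have [k k_gt0 bka] := mul_mod_solvable pe_gt0 (dvdn_trans ba (dvdn_gcdl a _)).
  by exists k; [|right].
Qed.

Lemma card_ord_lt N m : m <= N -> #|[pred i : 'I_N | i < m]| = m.
Proof.
move=> le_mN; have widen_inj : injective (widen_ord le_mN).
  by move=> i j /(congr1 val) eq_ij; apply: val_inj.
rewrite -[RHS](card_ord m) -(card_codom widen_inj); apply: eq_card => i.
rewrite inE; apply/idP/codomP => [lt_im | [j ->]]; last exact: (ltn_ord j).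
by exists (Ordinal lt_im); apply: val_inj.
Qed.

Section PendantClique.

Variables (T : finType) (P : {pred T}) (z : T).

Definition pendant_clique : rel T :=
  fun x y => (x != y) && [|| (x \in P) && (y \in P), x == z | y == z].

Local Notation R := pendant_clique.

Hypothesis zP : z \in P.

Lemma pendant_clique_sym : symmetric R.
Proof. by move=> x y; rewrite /R [x == y]eq_sym (andbC (x \in P)) (orbC (x == z)). Qed.

Lemma pendant_clique_out x y : x \notin P -> R x y -> y = z.
Proof.
move=> xNP /andP[_]; rewrite (negbTE xNP) /=.
by case: eqP => [xz | _ /eqP //]; rewrite xz zP in xNP.
Qed.

Lemma pendant_clique_hub x : x != z -> R x z.
Proof. by move=> xNz; rewrite /R xNz eqxx !orbT. Qed.

Lemma size_uniq_sub s : uniq s -> {subset s <= P} -> size s <= #|P|.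
Proof. by move=> us sP; rewrite -(card_uniqP us); apply/subset_leq_card/subsetP. Qed.

Lemma path_clique u s : uniq (u :: s) -> {subset u :: s <= P} -> path R u s.
Proof.
elim: s u => [|y s IH] u //= /andP[uNys uniq_ys] sub_P.
have [uP yP] : u \in P /\ y \in P by split; apply: sub_P; rewrite !inE eqxx ?orbT.
apply/andP; split; last by apply: IH => // x xs; apply: sub_P; rewrite in_cons xs orbT.
by rewrite /R uP yP /= andbT; apply: contraNneq uNys => ->; rewrite mem_head.
Qed.

(* A vertex outside P has the single neighbour z, so it cannot be interior. *)
Lemma pendant_path_belast u s :
  u \in P -> uniq (u :: s) -> path R u s -> {subset belast u s <= P}.
Proof.
elim: s u => [|y s IH] u uP //= /andP[uNys uniq_ys] /andP[Ruy path_ys] x.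
rewrite inE => /predU1P[-> // | x_bel].
case: s IH uNys uniq_ys path_ys x_bel => [// | y' s] IH uNys uniq_ys path_ys x_bel.
have yP : y \in P.
  apply: contraNT uNys => yNP; move: path_ys => /andP[Ryy' _].
  rewrite pendant_clique_sym in Ruy.
  by rewrite (pendant_clique_out yNP Ruy) -(pendant_clique_out yNP Ryy') !inE eqxx orbT.
exact: IH x_bel.
Qed.

Lemma size_path_in u s : u \in P -> uniq (u :: s) -> path R u s -> size s <= #|P|.
Proof.
move=> uP us ps; rewrite -(size_belast u); apply: size_uniq_sub.
  by move: us; rewrite lastI rcons_uniq => /andP[].
exact: pendant_path_belast.
Qed.

Lemma size_path_hub s : 1 < #|P| -> uniq (z :: s) -> path R z s -> size s < #|P|.
Proof.
move=> P_gt1; case/lastP: s => [_ _ | s w zs ps]; first exact: ltnW P_gt1.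
have sP : {subset z :: s <= P}.
  by rewrite -(belast_rcons z s w); exact: pendant_path_belast.
have [wP | wNP] := boolP (w \in P).
  apply: (size_uniq_sub zs) => x; rewrite -rcons_cons mem_rcons inE.
  by case/predU1P => [-> // | /sP].
move: ps; rewrite rcons_path pendant_clique_sym => /andP[_ /(pendant_clique_out wNP) last_z].
case: s zs {sP} last_z => [_ _ | y s /andP[]]; first exact: P_gt1.
rewrite mem_rcons in_cons negb_or => /andP[_ zNys] _ /= last_z.
by move: (mem_last y s); rewrite last_z (negbTE zNys).
Qed.

Lemma size_path u s :
  1 < #|P| -> uniq (u :: s) -> path R u s -> size s <= #|P| - (u == z).
Proof.
move=> P_gt1; have [-> | uNz] := eqVneq u z.
  by move=> zs ps; rewrite subn1 -ltnS prednK ?size_path_hub // (leq_trans _ P_gt1).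
rewrite subn0; have [uP | uNP] := boolP (u \in P); first exact: size_path_in.
case: s => [// | y s] /= /andP[_ ys] /andP[Ruy ps].
by rewrite (pendant_clique_out uNP Ruy) in ys ps; apply: size_path_hub.
Qed.

Lemma exists_longest_path u h : h \notin P ->
  exists s, [/\ uniq (u :: s), path R u s & size s = #|P| - (u == z)].
Proof.
move=> hNP; pose Q := [predD1 P & z].
have cardQ : #|Q| = #|P| - 1 by rewrite [#|P|](cardD1 z) zP addKn.
have QP : {subset z :: enum Q <= P}.
  by move=> x; rewrite inE mem_enum => /predU1P[-> // | /andP[]].
have zNQ : z \notin enum Q by rewrite mem_enum inE eqxx.
have hub_path : path R z (enum Q) by apply: path_clique; rewrite //= zNQ enum_uniq.
have [-> | uNz] := eqVneq u z.
  by exists (enum Q); rewrite /= zNQ enum_uniq -cardE cardQ.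
have [uP | uNP] := boolP (u \in P); last first.
  have P_gt0 : 0 < #|P| by apply/card_gt0P; exists z.
  exists (z :: enum Q); split; rewrite /= ?pendant_clique_hub ?hub_path //.
    by rewrite zNQ enum_uniq in_cons negb_or uNz mem_enum inE (negbTE uNP) andbF.
  by rewrite -cardE cardQ subn0 subn1 prednK.
pose Q' := [predD1 Q & u].
have uQ : u \in Q by rewrite inE uNz.
have cardQ' : #|Q'| = #|Q| - 1 by rewrite [#|Q|](cardD1 u) uQ addKn.
have Q'P : {subset u :: enum Q' <= P}.
  by move=> x; rewrite inE mem_enum => /predU1P[-> // | /and3P[]].
have Q'Nz : {subset u :: enum Q' <= predC1 z}.
  by move=> x; rewrite inE mem_enum => /predU1P[-> // | /and3P[]].
have [uNh zNh] : u != h /\ z != h by split; apply: contraNneq hNP => <-.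
exists (enum Q' ++ [:: z; h]); split.
- rewrite /= mem_cat cat_uniq enum_uniq /= !mem_enum !inE.
  by rewrite (negbTE uNz) (negbTE uNh) (negbTE zNh) (negbTE hNP) !eqxx !andbF.
- rewrite cat_path path_clique //=; last by rewrite mem_enum !inE eqxx enum_uniq.
  have lastNz : last u (enum Q') != z.
    by have := Q'Nz _ (mem_last u (enum Q')); rewrite inE.
  by rewrite pendant_clique_hub // pendant_clique_sym pendant_clique_hub // eq_sym.
- have : 0 < #|Q| by apply/card_gt0P; exists u.
  by rewrite size_cat -cardE cardQ' cardQ /=; lia.
Qed.

End PendantClique.

Lemma gm_gt1 n : 1 < n -> 1 < gm n.
Proof. by move=> n_gt1; rewrite /gm (@leq_exp2l 2 1) // subn_gt0. Qed.

Lemma expn_gm n : 0 < n -> 2 ^ n = 2 * gm n.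
Proof. by case: n => // n _; rewrite /gm subn1 expnS. Qed.

Lemma gm_lt_expn n : 0 < n -> gm n < 2 ^ n.
Proof. by move=> n_gt0; rewrite expn_gm // ltn_Pmull // /gm expn_gt0. Qed.

Lemma gpow_low n u k : u < gm n -> 0 < k -> gpow n u k = (k * u) %% gm n.
Proof.
move=> u_lt; case: k => // k _; rewrite /gpow /=.
elim: k => [|k IH] /=; first by rewrite mul1n modn_small.
by rewrite IH /gop ltn_pmod ?u_lt ?(leq_ltn_trans _ u_lt) // modnDml mulSn addnC.
Qed.

Lemma gpow_high n u k : 1 < n -> gm n <= u < 2 * gm n ->
  gpow n u k.+1 = if odd k then 0 else u.
Proof.
move=> n_gt1 /andP[le_mu lt_u2m]; have m_gt1 := gm_gt1 n_gt1.
have m_even : gm n = 2 * 2 ^ (n - 2) by rewrite -expnS; congr (2 ^ _); lia.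
elim: k => [// | k IH]; rewrite /gpow iterS -/(gpow n u k.+1) IH [odd _.+1]/=.
case: (odd k); rewrite /gop /= [u < _]ltnNge le_mu /=.
- rewrite ifT ?(ltnW m_gt1) // add0n -{1}(subnK le_mu) modnDr modn_small ?subnK //.
  lia.
- have -> : (gm n %/ 2 + 1) * u + (gm n %/ 2 - 1) * u = gm n * u.
    rewrite -mulnDl; congr (_ * _); have : 0 < 2 ^ (n - 2) by rewrite expn_gt0.
    lia.
  by rewrite modnMr.
Qed.

Lemma gpow_high_cases n u k : 1 < n -> gm n <= u < 2 * gm n -> 0 < k ->
  gpow n u k = u \/ gpow n u k = 0.
Proof. by move=> n_gt1 u_high; case: k => // k _; rewrite gpow_high //; case: odd; auto. Qed.

Lemma gpow_eq0 n u : 1 < n -> u < 2 * gm n -> exists2 k, 0 < k & gpow n u k = 0.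
Proof.
move=> n_gt1 u_lt; have m_gt0 : 0 < gm n := ltnW (gm_gt1 n_gt1).
have [u_low | u_high] := ltnP u (gm n).
  by exists (gm n); rewrite // gpow_low // modnMr.
by exists 2; rewrite // gpow_high ?u_high.
Qed.

Definition gid n : V n := Ordinal (expn_gt0 2 n).

Definition gP n : {pred V n} := [pred x : V n | x < gm n].

Arguments gid : clear implicits.
Arguments gP : clear implicits.

Lemma card_gP n : 0 < n -> #|gP n| = gm n.
Proof. by move=> n_gt0; rewrite card_ord_lt // ltnW ?gm_lt_expn. Qed.

Lemma gid_gP n : gid n \in gP n.
Proof. by rewrite inE /gm expn_gt0. Qed.

Lemma gid_eq n (u : V n) : (u == gid n) = (nat_of_ord u == 0).
Proof. by rewrite -val_eqE. Qed.

Lemma padj_pendant_clique n : 1 < n -> @padj n =2 pendant_clique (gP n) (gid n).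
Proof.
move=> n_gt1 u v; rewrite /padj /pendant_clique; case: eqVneq => //= uNv.
rewrite !inE !gid_eq.
have lt_2m (x : V n) : x < 2 * gm n by rewrite -expn_gm ?(ltnW n_gt1).
have power_adj (x y : V n) k : x != y -> 0 < k -> gpow n x k = y ->
    [|| (x < gm n) && (y < gm n), nat_of_ord x == 0 | nat_of_ord y == 0].
  move=> xNy k_gt0 xy; rewrite -xy; have [x_low | x_high] := ltnP x (gm n).
    by rewrite /= gpow_low // ltn_pmod // (leq_ltn_trans _ x_low).
  have [x_pow | ->] := gpow_high_cases n_gt1 (introT andP (conj x_high (lt_2m x))) k_gt0.
    by case/eqP: xNy; apply: val_inj; rewrite /= -xy x_pow.
  by rewrite eqxx !orbT.
apply/asboolP/idP; first case=> k [k_gt0 [uv | vu]].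
- exact: power_adj uNv k_gt0 uv.
- rewrite eq_sym in uNv; have := power_adj _ _ _ uNv k_gt0 vu.
  by case/or3P => [/andP[-> ->] | -> | ->]; rewrite ?orbT.
case/or3P => [/andP[u_low v_low] | /eqP u0 | /eqP v0].
- have [k k_gt0 uv] := mul_mod_pexp_total (n - 1) u v (isT : prime 2).
  exists k; split => //; rewrite !gpow_low //.
  by rewrite -!/(gm n) !(modn_small u_low) !(modn_small v_low) in uv.
- have [k k_gt0 v_pow] := gpow_eq0 n_gt1 (lt_2m v).
  by exists k; split => //; right; rewrite v_pow u0.
- have [k k_gt0 u_pow] := gpow_eq0 n_gt1 (lt_2m u).
  by exists k; split => //; left; rewrite u_pow v0.
Qed.

Lemma detour_ecc_longest n (u : V n) k :
  (forall s, uniq (u :: s) -> path (@padj n) u s -> size s <= k) ->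
  (exists s, [/\ uniq (u :: s), path (@padj n) u s & size s = k]) ->
  detour_ecc u = k.
Proof.
move=> longest [s [us ps size_s]]; subst k; apply/eqP; rewrite eqn_leq; apply/andP; split.
  apply/bigmax_leqP => v _; apply/bigmax_leqP => i /existsP[t /and3P[ut pt _]].
  by rewrite -(size_tuple t); apply: longest.
have s_lt : size s < 2 ^ n.
  by have := max_card (mem (u :: s)); rewrite (card_uniqP us) card_ord.
apply: leq_trans (leq_bigmax (last u s)); rewrite /detour_dist.
apply: (@leq_bigmax_cond _ _ _ (Ordinal s_lt)); apply/existsP; exists (in_tuple s).
by rewrite us ps eqxx.
Qed.

Lemma detour_ecc_gyrogroup n (u : V n) : 1 < n -> detour_ecc u = gm n - (val u == 0).
Proof.
move=> n_gt1; have card_P := card_gP (ltnW n_gt1).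
change (val u == 0) with (nat_of_ord u == 0); rewrite -gid_eq -card_P.
apply: detour_ecc_longest => [s us | ].
  rewrite (eq_path (padj_pendant_clique n_gt1)).
  by apply: size_path => //; [exact: gid_gP | rewrite card_P gm_gt1].
have hNP : Ordinal (gm_lt_expn (ltnW n_gt1)) \notin gP n by rewrite inE ltnn.
have [s [us ps size_s]] := exists_longest_path (gid_gP n) u hNP.
by exists s; rewrite (eq_path (padj_pendant_clique n_gt1)).
Qed.

HB.instance Definition _ := SemiGroup.isComLaw.Build nat minn minnA minnC.

Theorem mainTheorem10 (n : nat) (hn : 3 <= n) :
  [/\ (forall u : V n, 0 < val u < 2 ^ (n - 1) -> detour_ecc u = 2 ^ (n - 1)),
      (forall u : V n, val u = 0 -> detour_ecc u = 2 ^ (n - 1) - 1),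
      (forall u : V n, 2 ^ (n - 1) <= val u -> detour_ecc u = 2 ^ (n - 1)),
      detour_rad n = 2 ^ (n - 1) - 1
    & detour_diam n = 2 ^ (n - 1)].
Proof.
have n_gt1 : 1 < n := ltnW hn; have m_gt0 : 0 < gm n := ltnW (gm_gt1 n_gt1).
have ecc u := detour_ecc_gyrogroup u n_gt1.
change (2 ^ (n - 1)) with (gm n); split.
- by move=> u /andP[u_gt0 _]; rewrite ecc gtn_eqF ?subn0.
- by move=> u u0; rewrite ecc u0.
- by move=> u le_mu; rewrite ecc gtn_eqF ?subn0 // (leq_trans m_gt0).
- rewrite /detour_rad (bigD1 (gid n)) //= ecc subn1; apply/minn_idPl.
  apply: (big_ind (fun x => (gm n).-1 <= x)) => [| x y | v _]; rewrite ?leq_min.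
  + exact: leq_trans (leq_pred _) (ltnW (gm_lt_expn (ltnW n_gt1))).
  + by move=> -> ->.
  + by rewrite ecc -subn1 leq_sub2l ?leq_b1.
- apply/eqP; rewrite eqn_leq; apply/andP; split.
    by apply/bigmax_leqP => u _; rewrite ecc leq_subr.
  apply: leq_trans (leq_bigmax (Ordinal (gm_lt_expn (ltnW n_gt1)))).
  by rewrite ecc /= gtn_eqF ?subn0.
Qed.
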